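(* Let $s,t$ be real numbers with $t \geq s > 0$. For each positive integer $n$, let $M_n$ denote the maximum of $|\det A|$ over all matrices $A \in \mathcal{G}_s^{n\times n}([0,t])$. Then $M_1 = t$, $M_2 = t^2$, and $M_n = t\,M_{n-1} + s^2 M_{n-2}$ for all integers $n > 2$.
   Context: For a real number $s$, a positive integer $n$ and a set $P \subseteq \mathbb{R}$, $\mathcal{G}_s^{n\times n}(P)$ denotes the set of all $n\times n$ real upper Hessenberg matrices $A=(a_{ij})$ with $a_{i+1,i} = s$ for $1\le i\le n-1$, $a_{ij}=0$ for $i > j+1$, and $a_{ij}\in P$ for all $i \le j$. *)

From HB Require Import structures.
From mathcomp Require Import all_boot all_order all_algebra.
From mathcomp Require Import reals.
Set Implicit Arguments. Unset Strict Implicit. Unset Printing Implicit Defensive.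
Import Order.TTheory GRing.Theory Num.Theory.
Local Open Scope ring_scope.

(* A \in G_s^{n x n}(P): upper Hessenberg, subdiagonal entries equal to s,
   entries below the subdiagonal are 0, entries on/above the diagonal lie in P.
   Indices i, j : 'I_n are 0-based; the conditions are shift-invariant. *)
Definition hessG (R : ringType) (s : R) (P : R -> Prop) (n : nat)
    (A : 'M[R]_n) : Prop :=
  forall i j : 'I_n,
    ((i : nat) = j.+1 -> A i j = s) /\
    ((j.+1 < i)%N -> A i j = 0) /\
    ((i <= j)%N -> P (A i j)).

Definition Icc0 (R : realType) (t : R) : R -> Prop := fun x => 0 <= x /\ x <= t.

Definition is_max_absdet (R : realType) (s t : R) (n : nat) (m : R) : Prop :=
  (exists A : 'M[R]_n, hessG s (Icc0 t) A /\ `|\det A| = m) /\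
  (forall A : 'M[R]_n, hessG s (Icc0 t) A -> `|\det A| <= m).

(* Expanding along the last row, a matrix of G_s^{(k+2)x(k+2)}([0,t]) with last
   column v has determinant v_{k+1} x - s D(v), where x is its leading
   (k+1)-minor and D(v) is that minor with its last column replaced by
   (v_0, ..., v_k).  As D is linear, on the box [0,t]^{k+1} it ranges over an
   interval [-Q, P]; by induction on k one keeps P, Q <= M_{k+1} and
   min(P, Q) <= s M_k, where M_0 = 0, M_1 = t, M_{k+2} = t M_{k+1} + s^2 M_k,
   which bounds |det| by M_n.  Conversely the checkerboard matrix, whose entry
   (i, j) for i <= j is t if i + j is even and 0 otherwise, has determinant
   M_n, and replacing its last column by the complementary one gives
   -s M_{n-1}; both follow from the same expansion. *)

From HB Require Import structures.
From mathcomp Require Import all_boot all_order all_algebra.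
From mathcomp Require Import reals.
From mathcomp Require Import lra ring.
Import Order.TTheory GRing.Theory Num.Theory.
Local Open Scope ring_scope.
Set Implicit Arguments.
Unset Strict Implicit.

Section DetLastColumn.
Variable R : comPzRingType.

(* Matrices of all sizes are cut out of one array indexed by nat. *)
Definition det_lastcol k (a : nat -> nat -> R) (v : nat -> R) : R :=
  \det (\matrix_(i < k.+1, j < k.+1) if j == k :> nat then v i else a i j).

Lemma det_lastcol_mx k (a : nat -> nat -> R) :
  \det (\matrix_(i < k.+1, j < k.+1) a i j) = det_lastcol k a (a^~ k).
Proof.
congr (\det _); apply/matrixP => i j; rewrite !mxE.
by case: eqP => // ->.
Qed.

Lemma eq_det_lastcol k a (v u : nat -> R) :
  (forall i, (i <= k)%N -> v i = u i) -> det_lastcol k a v = det_lastcol k a u.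
Proof.
move=> vu; congr (\det _); apply/matrixP => i j; rewrite !mxE.
by case: eqP => // _; apply: vu; rewrite -ltnS.
Qed.

Lemma det_lastcol0 a v : det_lastcol 0 a v = v 0%N.
Proof. by rewrite /det_lastcol det_mx11 mxE. Qed.

Lemma det_lastcolS k a v : (forall j, (j < k)%N -> a k.+1 j = 0) ->
  det_lastcol k.+1 a v =
    v k.+1 * det_lastcol k a (a^~ k) - a k.+1 k * det_lastcol k a v.
Proof.
move=> row0; rewrite /det_lastcol (expand_det_row _ ord_max).
rewrite big_ord_recr big_ord_recr /= big1 ?add0r => [|j _]; last first.
  by rewrite !mxE /= ltn_eqF ?row0 ?mul0r // ltnS ltnW.
rewrite !mxE /= eqxx ltn_eqF // addrC; congr (_ + _).
  rewrite /cofactor /= addnn -muln2 exprM sqrr_sign mul1r; congr (_ * \det _).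
  apply/matrixP => i j; rewrite !mxE /= /bump.
  rewrite (ltn_geF (ltn_ord i)) (ltn_geF (ltn_ord j)) !add0n ltn_eqF //.
  by case: eqP => // ->.
rewrite /cofactor /= addSn addnn exprS -muln2 exprM sqrr_sign mulr1 mulN1r mulrN.
congr (- (_ * \det _)); apply/matrixP => i j; rewrite !mxE /= /bump.
rewrite (ltn_geF (ltn_ord i)) add0n.
have [->|jk] := eqVneq (j : nat) k; first by rewrite leqnn eqxx.
have jltk : (j < k)%N by rewrite ltn_neqAle jk -ltnS ltn_ord.
by rewrite (ltn_geF jltk) add0n ltn_eqF // ltnS ltnW.
Qed.

End DetLastColumn.

Section MaxDet.
Variables (R : realFieldType) (s t : R).
Hypotheses (s_ge0 : 0 <= s) (s_le_t : s <= t).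

Fixpoint maxdet k : R :=
  match k with
  | 0 => 0
  | 1 => t
  | (k'.+1 as k1).+1 => t * maxdet k1 + s ^+ 2 * maxdet k'
  end.

Lemma maxdetSS k : maxdet k.+2 = t * maxdet k.+1 + s ^+ 2 * maxdet k.
Proof. by []. Qed.

Lemma t_ge0 : 0 <= t. Proof. exact: le_trans s_le_t. Qed.

Lemma maxdet_ge0 k : 0 <= maxdet k.
Proof.
suff: 0 <= maxdet k /\ 0 <= maxdet k.+1 by case.
elim: k => [|k [m0 m1]]; first exact: (conj (lexx 0) t_ge0).
by split=> //; rewrite maxdetSS addr_ge0 // mulr_ge0 ?sqr_ge0 ?t_ge0.
Qed.

Lemma maxdet_grows k : s * maxdet k <= maxdet k.+1.
Proof.
case: k => [|k]; first by rewrite mulr0 t_ge0.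
rewrite maxdetSS; have := maxdet_ge0 k; have := maxdet_ge0 k.+1.
move: s_ge0 s_le_t; rewrite expr2; nra.
Qed.

Definition admissible k (P Q : R) :=
  [/\ 0 <= P, 0 <= Q, P <= maxdet k.+1, Q <= maxdet k.+1
    & P <= s * maxdet k \/ Q <= s * maxdet k].

Lemma admissibleC k P Q : admissible k P Q -> admissible k Q P.
Proof. by case=> ? ? ? ? PQ; split=> //; case: PQ; [right|left]. Qed.

Lemma admissibleS k P Q x : admissible k P Q -> 0 <= x <= P ->
  admissible k.+1 (t * x + s * Q) (s * P).
Proof.
case=> P0 Q0 Pm Qm PQs /andP[x0 xP].
have := maxdet_ge0 k; have := maxdet_ge0 k.+1; have := maxdet_grows k.
move: s_ge0 s_le_t; rewrite /admissible maxdetSS expr2 => s0 st mg m1 m0.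
split; [nra | nra | | nra | by right; nra].
case: PQs => ?; nra.
Qed.

Definition hess_prefix k (a : nat -> nat -> R) :=
  forall j, (j < k)%N ->
    [/\ a j.+1 j = s, forall i, (j.+1 < i <= k)%N -> a i j = 0
      & forall i, (i <= j)%N -> 0 <= a i j <= t].

Definition in_box k (v : nat -> R) := forall i, (i <= k)%N -> 0 <= v i <= t.

Lemma hess_prefixW k a : hess_prefix k.+1 a -> hess_prefix k a.
Proof.
move=> ha j jk; have [sub zero col] := ha j (ltnW jk).
by split=> // i /andP[ji ik]; apply: zero; rewrite ji ltnW.
Qed.

Lemma expansion_bounds (v d x P Q : R) :
  0 <= v <= t -> -Q <= d <= P -> 0 <= x ->
  -(s * P) <= v * x - s * d <= t * x + s * Q.
Proof.
move=> /andP[v0 vt] /andP[dQ dP] x0.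
have vx0 : 0 <= v * x by rewrite mulr_ge0.
have vxt : v * x <= t * x by rewrite ler_wpM2r.
have sdP : s * d <= s * P by rewrite ler_wpM2l.
have sdQ : - (s * Q) <= s * d by rewrite -mulrN ler_wpM2l.
by apply/andP; split; lra.
Qed.

Lemma det_lastcol_bounds k a : hess_prefix k a ->
  exists P Q, admissible k P Q /\
    forall v, in_box k v -> -Q <= det_lastcol k a v <= P.
Proof.
elim: k => [|k IH] ha.
  exists t, 0; split.
    by split; rewrite ?lexx ?t_ge0 //; right; rewrite mulr0.
  by move=> v /(_ 0%N isT); rewrite det_lastcol0 oppr0.
have [sub _ col] := ha k (ltnSn k).
have row0 j : (j < k)%N -> a k.+1 j = 0.
  move=> jk; have [_ zero _] := ha j (ltnW jk).
  by apply: zero; rewrite ltnS jk leqnn.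
have [P [Q [adm bnd]]] := IH (hess_prefixW ha).
set x := det_lastcol k a (a^~ k).
have /andP[xQ xP] : -Q <= x <= P by exact: bnd.
have expand v : in_box k.+1 v -> [/\ 0 <= v k.+1 <= t,
    -Q <= det_lastcol k a v <= P &
    det_lastcol k.+1 a v = v k.+1 * x - s * det_lastcol k a v].
  move=> vb; split; first exact: vb.
    by apply: bnd => i ik; apply: vb; rewrite ltnW.
  by rewrite det_lastcolS // sub.
have [x0|x0] := leP 0 x.
  exists (t * x + s * Q), (s * P); split; first by apply: admissibleS; rewrite ?x0.
  by move=> v /expand[vb db ->]; apply: expansion_bounds.
exists (s * Q), (t * - x + s * P); split.
  by apply/admissibleC/admissibleS; [exact: admissibleC | apply/andP; split; lra].
move=> v /expand[vb /andP[dQ dP] ->].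
have /andP[lo hi] :=
  expansion_bounds (d := - det_lastcol k a v) (P := Q) (Q := P) vb
  (ltac:(apply/andP; split; lra)) (ltac:(lra) : 0 <= - x).
by apply/andP; split; lra.
Qed.

Definition checkerboard (i j : nat) : R :=
  if (i <= j)%N then (if odd (i + j) then 0 else t)
  else if i == j.+1 then s else 0.

Lemma checkerboard_flip i k :
  (i <= k)%N -> checkerboard i k.+1 = t - checkerboard i k.
Proof.
move=> ik; rewrite /checkerboard ik leqW // addnS /=.
by case: odd; rewrite ?subr0 ?subrr.
Qed.

Lemma det_checkerboard k :
  det_lastcol k checkerboard (checkerboard^~ k) = maxdet k.+1 /\
  det_lastcol k checkerboard (fun i => t - checkerboard i k) = - (s * maxdet k).
Proof.
elim: k => [|k [IHw IHv]].
  by rewrite !det_lastcol0 /checkerboard /= subrr mulr0 oppr0.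
have row0 j : (j < k)%N -> checkerboard k.+1 j = 0.
  by move=> jk; rewrite /checkerboard ltn_geF ?eqSS ?gtn_eqF // ltnW.
have sub : checkerboard k.+1 k = s by rewrite /checkerboard ltnn eqxx.
have diag : checkerboard k.+1 k.+1 = t.
  by rewrite /checkerboard leqnn addnn odd_double.
have colS : det_lastcol k checkerboard (checkerboard^~ k.+1) =
    det_lastcol k checkerboard (fun i => t - checkerboard i k).
  by apply: eq_det_lastcol => i; exact: checkerboard_flip.
have colS' : det_lastcol k checkerboard (fun i => t - checkerboard i k.+1) =
    det_lastcol k checkerboard (checkerboard^~ k).
  by apply: eq_det_lastcol => i ik; rewrite checkerboard_flip // opprB addrC subrK.
rewrite !det_lastcolS // sub diag colS colS' IHv IHw maxdetSS subrr mul0r sub0r.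
by split=> //; ring.
Qed.

End MaxDet.

Section HessenbergMatrices.
Variables (R : realType) (s t : R).
Hypotheses (s_ge0 : 0 <= s) (s_le_t : s <= t).

Local Notation maxdet := (maxdet s t).
Local Notation hess_prefix := (hess_prefix s t).
Local Notation in_box := (in_box t).
Local Notation checkerboard := (checkerboard s t).

Lemma hessG_prefix k (a : nat -> nat -> R) :
  hessG s (Icc0 t) (\matrix_(i < k.+1, j < k.+1) a i j) ->
  hess_prefix k a /\ in_box k (a^~ k).
Proof.
move=> hA.
have entry i j : (i <= k)%N -> (j <= k)%N ->
    [/\ i = j.+1 -> a i j = s, (j.+1 < i)%N -> a i j = 0
      & (i <= j)%N -> 0 <= a i j <= t].
  move=> ik jk; have [sub [zero box]] := hA (inord i) (inord j).
  rewrite !mxE !inordK // in sub zero box.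
  by split=> // /box[? ?]; apply/andP.
split=> [j jk | i ik]; last by have [_ _ ->] := entry i k ik (leqnn k).
have [sub _ _] := entry j.+1 j jk (ltnW jk).
split=> [|i /andP[ji ik] | i ij]; first exact: sub.
  by have [_ zero _] := entry i j ik (ltnW jk); apply: zero.
by have [_ _ ->] := entry i j (leq_trans ij (ltnW jk)) (ltnW jk).
Qed.

Lemma absdet_le_maxdet k (A : 'M[R]_k.+1) :
  hessG s (Icc0 t) A -> `|\det A| <= maxdet k.+1.
Proof.
pose a i j : R := A (inord i) (inord j).
have -> : A = \matrix_(i, j) a i j.
  by apply/matrixP => i j; rewrite mxE /a !inord_val.
move=> /hessG_prefix[ha col]; rewrite det_lastcol_mx.
have [P [Q [[_ _ Pm Qm _] bnd]]] := det_lastcol_bounds s_ge0 s_le_t ha.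
have /andP[lo hi] := bnd _ col.
by rewrite ler_norml; apply/andP; split; lra.
Qed.

Lemma hessG_checkerboard n :
  hessG s (Icc0 t) (\matrix_(i < n, j < n) checkerboard i j).
Proof.
move=> i j; rewrite !mxE /checkerboard.
split; first by move=> ->; rewrite ltnn eqxx.
split=> [ji | ->]; first by rewrite ltn_geF ?gtn_eqF // ltnW.
by have := t_ge0 s_ge0 s_le_t; case: odd; split.
Qed.

End HessenbergMatrices.

Unset Implicit Arguments.

Theorem theorem2p6 (R : realType) (s t : R) :
  0 < s -> s <= t ->
  exists M : nat -> R,
    (forall n : nat, (0 < n)%N -> is_max_absdet s t n (M n)) /\
    M 1%N = t /\ M 2%N = t ^+ 2 /\
    (forall n : nat, (2 < n)%N -> M n = t * M n.-1 + s ^+ 2 * M n.-2).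
Proof.
move=> /ltW s_ge0 s_le_t; exists (maxdet s t); split.
  case=> [//|k] _; split; last exact: absdet_le_maxdet.
  exists (\matrix_(i, j) checkerboard s t i j).
  split; first exact: hessG_checkerboard.
  rewrite det_lastcol_mx (det_checkerboard s t k).1.
  by rewrite ger0_norm // maxdet_ge0.
split; first by [].
split; first by rewrite /= mulr0 addr0 expr2.
by case=> [|[|[|n]]].
Qed.
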